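(* Let $k\ge 2$ and let $\mathbf{d}_1,\dots,\mathbf{d}_k\in\mathbb{R}^3$ be unit vectors. Then there exists a unit vector $\mathbf{d}\in\mathbb{R}^3$ such that $\frac{1}{10k}\le|\mathbf{d}^\top\mathbf{d}_i|\le 1-\frac{1}{10k}$ for all $1\le i\le k$. *)

From HB Require Import structures.
From mathcomp Require Import all_boot all_order all_algebra.
From mathcomp Require Import reals.
Set Implicit Arguments. Unset Strict Implicit. Unset Printing Implicit Defensive.
Import Order.TTheory GRing.Theory Num.Theory.
Local Open Scope ring_scope.

Definition dot3 (R : realType) (u v : 'rV[R]_3) : R := \sum_(j < 3) u 0 j * v 0 j.

Definition unit3 (R : realType) (u : 'rV[R]_3) : Prop := dot3 u u = 1.

From HB Require Import structures.
From mathcomp Require Import all_boot all_order all_algebra.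
From mathcomp Require Import reals.
From mathcomp Require Import ring lra zify.
Set Implicit Arguments. Unset Strict Implicit. Unset Printing Implicit Defensive.
Import Order.TTheory GRing.Theory Num.Theory.
Local Open Scope ring_scope.

(* Put e = 1/(10k) and N = 30k, and call a point x of the grid {-N..N}^3 bad for d_i
   when |<x, d_i>| <= e|x| (x lies near the plane orthogonal to d_i) or
   |<x, d_i>| > (1 - e)|x| (x lies near the axis R d_i).  Slicing the grid along the
   largest coordinate of d_i, every line meets the slab in at most 6eN + 1 points, and
   the slice at height c meets the double cone inside a box of sides 2|c|H1 + 1 and
   2|c|H2 + 1 with H1 H2 <= 18e.  Hence each d_i makes fewer than (2N + 1)^3 / k grid
   points bad, some grid point is good for every d_i, and its normalisation is d. *)

Lemma sorted_ltn_last (x : nat) (s : seq nat) :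
  sorted ltn (x :: s) -> (x + size s <= last x s)%N.
Proof.
elim: s x => [|y s IHs] x /=; first by rewrite addn0.
by case/andP=> lt_xy /IHs; apply: leq_trans; rewrite addnS ltn_add2r.
Qed.

Section GridCounting.
Context {R : realType}.

Lemma normr_lt_sqr (x b : R) : 0 <= b -> (`|x| < b) = (x ^+ 2 < b ^+ 2).
Proof. by move=> b_ge0; rewrite -ltr_sqr ?nnegrE ?normr_ge0 // real_normK ?num_real. Qed.

Lemma normr_le_sqr (x b : R) : 0 <= b -> (`|x| <= b) = (x ^+ 2 <= b ^+ 2).
Proof. by move=> b_ge0; rewrite -ler_sqr ?nnegrE ?normr_ge0 // real_normK ?num_real. Qed.

Lemma sqrtr_le (X b : R) : 0 <= b -> X <= b ^+ 2 -> Num.sqrt X <= b.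
Proof.
by move=> b_ge0 le_Xb; rewrite -(ger0_norm b_ge0) -sqrtr_sqr ler_sqrt ?sqr_ge0.
Qed.

Lemma sum_indicator_le_diam (M : nat) (P : pred nat) (L : R) : 0 <= L ->
  (forall z1 z2, (z1 < M)%N -> (z2 < M)%N -> P z1 -> P z2 -> z2%:R - z1%:R <= L) ->
  \sum_(z <- iota 0 M) (P z)%:R <= L + 1.
Proof.
move=> L_ge0 diamP.
have -> : \sum_(z <- iota 0 M) (P z)%:R = (size [seq z <- iota 0 M | P z])%:R :> R.
  rewrite size_filter -sum1_count natr_sum [RHS]big_mkcond.
  by apply: eq_bigr => z _; case: (P z).
have : sorted ltn [seq z <- iota 0 M | P z].
  by apply: sorted_filter; [exact: ltn_trans | exact: iota_ltn_sorted].
have memP z : z \in [seq z <- iota 0 M | P z] -> (z < M)%N && P z.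
  by rewrite mem_filter mem_iota add0n andbC.
move: memP; case: [seq z <- iota 0 M | P z] => [|x s] memP sorted_s /=.
  lra.
have /andP[ltxM Px] := memP x (mem_head _ _).
have /andP[ltlM Pl] := memP _ (mem_last x s).
rewrite -addn1 natrD lerD2r; apply: le_trans (diamP _ _ ltxM ltlM Px Pl).
rewrite lerBrDr -natrD ler_nat addnC.
exact: sorted_ltn_last.
Qed.

Definition line (N : nat) : seq R := [seq z%:R - N%:R | z <- iota 0 (2 * N).+1].

Variable N : nat.

Lemma line_normr_le x : x \in line N -> `|x| <= N%:R.
Proof.
case/mapP=> z; rewrite mem_iota add0n ltnS => /= le_z2N ->.
by rewrite ler_norml lerBlDr -natrD ler_nat lerBrDr addNr ler0n /=; lia.
Qed.

Lemma line_sqr_le x : x \in line N -> x ^+ 2 <= N%:R ^+ 2.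
Proof. by move/line_normr_le; rewrite normr_le_sqr. Qed.

Lemma line_count_le_diam (P : pred R) (L : R) : 0 <= L ->
  {in line N &, forall x1 x2, P x1 -> P x2 -> x2 - x1 <= L} ->
  \sum_(x <- line N) (P x)%:R <= L + 1.
Proof.
move=> L_ge0 diamP; rewrite big_map.
apply: sum_indicator_le_diam => // z1 z2 lt_z1 lt_z2 P1 P2.
have mem_line z : (z < (2 * N).+1)%N -> z%:R - N%:R \in line N.
  by move=> lt_z; apply/mapP; exists z; rewrite ?mem_iota.
have := diamP _ _ (mem_line _ lt_z1) (mem_line _ lt_z2) P1 P2.
by rewrite opprB addrA subrK.
Qed.

Lemma line_count_le_ball (P : pred R) (x0 r : R) : 0 <= r ->
  (forall x, P x -> `|x - x0| < r) -> \sum_(x <- line N) (P x)%:R <= 2 * r + 1.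
Proof.
move=> r_ge0 ballP; apply: line_count_le_diam => [|x1 x2 _ _ /ballP P1 /ballP P2].
  by rewrite mulr_ge0.
have := ler_norm (x2 - x0); have := ler_norm (- (x1 - x0)); rewrite normrN.
lra.
Qed.

Lemma sum_line_const (c : R) : \sum_(x <- line N) c = c * (2 * N%:R + 1).
Proof.
rewrite big_map -(subn0 (2 * N).+1) -/(index_iota 0 _) sumr_const_nat subn0.
by rewrite -[LHS]mulr_natr -[(2 * N).+1%:R]natr1 natrM.
Qed.

Lemma sum_line_sqr : 3 * \sum_(x <- line N) x ^+ 2 = N%:R * (N%:R + 1) * (2 * N%:R + 1).
Proof.
have sum_shift_sqr (b : R) n : 6 * \sum_(0 <= z < n) (z%:R - b) ^+ 2 =
    n%:R * (n%:R - 1) * (2 * n%:R - 1) - 6 * b * n%:R * (n%:R - 1) + 6 * n%:R * b ^+ 2.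
  elim: n => [|n IHn]; first by rewrite big_geq // mulr0; ring.
  by rewrite big_nat_recr //= mulrDr IHn -natr1; ring.
rewrite big_map -(subn0 (2 * N).+1) -/(index_iota 0 _).
have := sum_shift_sqr N%:R (2 * N).+1; rewrite -[(2 * N).+1%:R]natr1 natrM; lra.
Qed.

Lemma sum_lt_exists (I : Type) (r : seq I) (F G : I -> R) :
  \sum_(i <- r) F i < \sum_(i <- r) G i -> exists i, F i < G i.
Proof.
elim: r => [|i r IHr]; first by rewrite !big_nil ltxx.
rewrite !big_cons; case: (ltrP (F i) (G i)) => [ltFG _|leGF ltFGr]; first by exists i.
by apply: IHr; move: leGF ltFGr; lra.
Qed.

Definition grid_sum (F : R -> R -> R -> R) : R :=
  \sum_(x <- line N) \sum_(y <- line N) \sum_(z <- line N) F x y z.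

Lemma eq_grid_sum (F G : R -> R -> R -> R) :
  (forall x y z, F x y z = G x y z) -> grid_sum F = grid_sum G.
Proof. by move=> eqFG; do 3!(apply: eq_bigr => ? _). Qed.

Lemma ler_grid_sum (F G : R -> R -> R -> R) :
  (forall x y z, F x y z <= G x y z) -> grid_sum F <= grid_sum G.
Proof. by move=> leFG; do 3!(apply: ler_sum => ? _). Qed.

Lemma grid_sumD (F G : R -> R -> R -> R) :
  grid_sum (fun x y z => F x y z + G x y z) = grid_sum F + grid_sum G.
Proof.
rewrite /grid_sum -big_split; apply: eq_bigr => x _; rewrite -big_split.
by apply: eq_bigr => y _; rewrite -big_split.
Qed.

Lemma grid_sum_swap (F : R -> R -> R -> R) :
  grid_sum F = grid_sum (fun x y z => F y x z).
Proof. exact: exchange_big. Qed.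

Lemma grid_sum_rot (F : R -> R -> R -> R) :
  grid_sum F = grid_sum (fun x y z => F y z x).
Proof.
rewrite /grid_sum [RHS]exchange_big; apply: eq_bigr => y _.
exact: exchange_big.
Qed.

Lemma grid_sum_const (c : R) : grid_sum (fun _ _ _ => c) = c * (2 * N%:R + 1) ^+ 3.
Proof. by rewrite /grid_sum !sum_line_const; ring. Qed.

Lemma grid_sum_sum (I : finType) (F : I -> R -> R -> R -> R) :
  grid_sum (fun x y z => \sum_i F i x y z) = \sum_i grid_sum (F i).
Proof.
rewrite /grid_sum [RHS]exchange_big; apply: eq_bigr => x _.
rewrite [RHS]exchange_big; apply: eq_bigr => y _; exact: exchange_big.
Qed.

Lemma grid_sum_lt_exists (F G : R -> R -> R -> R) :
  grid_sum F < grid_sum G -> exists x y z, F x y z < G x y z.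
Proof.
case/sum_lt_exists=> x /sum_lt_exists[y /sum_lt_exists[z ltFG]].
by exists x, y, z.
Qed.

End GridCounting.

Section Row3.
Context {R : realType}.

Definition row3 (x y z : R) : 'rV[R]_3 := \row_j [:: x; y; z]`_j.

Lemma row3_coords (u : 'rV[R]_3) : u = row3 (u 0 0) (u 0 1) (u 0 2).
Proof.
apply/rowP=> j; rewrite mxE.
by case: j => [[|[|[|//]]]] lt_j /=; congr (u 0 _); apply: val_inj.
Qed.

Lemma dot3_row3 (x y z a b c : R) :
  dot3 (row3 x y z) (row3 a b c) = a * x + b * y + c * z.
Proof. by rewrite /dot3 !big_ord_recl big_ord0 !mxE /=; ring. Qed.

Lemma dot3_row3_swap (x y z a b c : R) :
  dot3 (row3 y x z) (row3 b a c) = dot3 (row3 x y z) (row3 a b c).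
Proof. by rewrite !dot3_row3; ring. Qed.

Lemma dot3_row3_rot (x y z a b c : R) :
  dot3 (row3 y z x) (row3 b c a) = dot3 (row3 x y z) (row3 a b c).
Proof. by rewrite !dot3_row3; ring. Qed.

Definition near_plane (e : R) (x u : 'rV[R]_3) : bool :=
  dot3 x u ^+ 2 <= e ^+ 2 * dot3 x x.

Definition near_axis (e : R) (x u : 'rV[R]_3) : bool :=
  (1 - e) ^+ 2 * dot3 x x < dot3 x u ^+ 2.

Lemma near_plane_row3 (e x y z a b c : R) :
  near_plane e (row3 x y z) (row3 a b c) =
  ((a * x + b * y + c * z) ^+ 2 <= e ^+ 2 * (x ^+ 2 + y ^+ 2 + z ^+ 2)).
Proof. by rewrite /near_plane !dot3_row3 !expr2. Qed.

Lemma near_axis_row3 (e x y z a b c : R) :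
  near_axis e (row3 x y z) (row3 a b c) =
  ((1 - e) ^+ 2 * (x ^+ 2 + y ^+ 2 + z ^+ 2) < (a * x + b * y + c * z) ^+ 2).
Proof. by rewrite /near_axis !dot3_row3 !expr2. Qed.

End Row3.

Section Band.
Variables (R : realType) (a p q e : R) (N : nat).
Hypotheses (a2_ge : 1 / 3 <= a ^+ 2) (e_ge0 : 0 <= e).

Lemma band_line_count (y z : R) : y \in line N -> z \in line N ->
  \sum_(x <- line N) (near_plane e (row3 x y z) (row3 a p q))%:R <= 6 * e * N%:R + 1.
Proof.
move=> /line_sqr_le y2_le /line_sqr_le z2_le.
have N_ge0 : 0 <= N%:R :> R by [].
apply: line_count_le_diam => [|x1 x2 /line_sqr_le x1_le /line_sqr_le x2_le].
  by rewrite !mulr_ge0.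
rewrite !near_plane_row3.
set D1 := a * x1 + p * y + q * z; set D2 := a * x2 + p * y + q * z => band1 band2.
have e2_ge0 := sqr_ge0 e.
have D1_le : D1 ^+ 2 <= e ^+ 2 * (3 * N%:R ^+ 2).
  by apply: le_trans band1 _; apply: ler_wpM2l => //; lra.
have D2_le : D2 ^+ 2 <= e ^+ 2 * (3 * N%:R ^+ 2).
  by apply: le_trans band2 _; apply: ler_wpM2l => //; lra.
have dD : D2 - D1 = a * (x2 - x1) by rewrite /D1 /D2; ring.
have dD_le : a ^+ 2 * (x2 - x1) ^+ 2 <= 12 * e ^+ 2 * N%:R ^+ 2.
  by rewrite -exprMn -dD; have := sqr_ge0 (D2 + D1); nra.
have : `|x2 - x1| <= 6 * e * N%:R.
  rewrite normr_le_sqr; last by rewrite !mulr_ge0.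
  have := ler_wpM2r (sqr_ge0 (x2 - x1)) a2_ge; rewrite !exprMn.
  by move: dD_le; lra.
exact: le_trans (ler_norm _).
Qed.

Lemma band_count :
  grid_sum N (fun x y z => (near_plane e (row3 x y z) (row3 a p q))%:R)
  <= (6 * e * N%:R + 1) * (2 * N%:R + 1) ^+ 2.
Proof.
rewrite 2!grid_sum_rot /grid_sum.
rewrite expr2 mulrA -!sum_line_const big_seq [leRHS]big_seq.
apply: ler_sum => y y_in; rewrite big_seq [leRHS]big_seq.
by apply: ler_sum => z z_in; apply: band_line_count.
Qed.

End Band.

Section Cone.
Variables (R : realType) (a p q e : R) (N : nat).
Hypotheses (unit_apq : a ^+ 2 + p ^+ 2 + q ^+ 2 = 1)
  (p2_le : p ^+ 2 <= a ^+ 2) (q2_le : q ^+ 2 <= a ^+ 2)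
  (e_gt0 : 0 < e) (e_le : e <= 1 / 20).

Let mu := (1 - e) ^+ 2.
Let eta := 1 - mu.
Let al := a ^+ 2 - eta.
Let A := mu - q ^+ 2.
Let H1 := Num.sqrt (eta * A / al ^+ 2).
Let H2 := Num.sqrt (mu * eta / (al * A)).
Let G (x y : R) := x ^+ 2 * eta * A / al - al * (y - x * a * p / al) ^+ 2.

Let a2_ge : 1 / 3 <= a ^+ 2.
Proof. by have := sqr_ge0 p; have := sqr_ge0 q; move: unit_apq p2_le q2_le; lra. Qed.
Let eta_E : eta = 2 * e - e ^+ 2. Proof. by rewrite /eta /mu; ring. Qed.
Let eta_gt0 : 0 < eta. Proof. by rewrite eta_E; move: e_gt0 e_le; nra. Qed.
Let eta_le : eta <= 1 / 10. Proof. by rewrite eta_E; move: e_gt0 e_le; nra. Qed.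
Let mu_ge : 361 / 400 <= mu. Proof. by rewrite /mu; move: e_gt0 e_le; nra. Qed.
Let mu_le : mu <= 1. Proof. by rewrite /mu; move: e_gt0 e_le; nra. Qed.
Let al_ge : 7 / 30 <= al. Proof. by move: a2_ge eta_le; rewrite /al; lra. Qed.
Let A_ge : 1 / 5 <= A.
Proof. by have := sqr_ge0 p; move: mu_ge a2_ge unit_apq; rewrite /A; lra. Qed.
Let A_le : A <= 1. Proof. by have := sqr_ge0 q; move: mu_le; rewrite /A; lra. Qed.

(* [lra] and [nra] ignore section hypotheses and [Let] facts, hence the [have := ...]
   and [move: ...] steps below. *)

(* Completing the square twice: the slice of the cone at height x is an ellipse;
   [0 < G x y] keeps y within |x| H1 of x a p / al, and then z stays within
   |x| H2 of q (a x + p y) / A. *)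

Lemma cone_form_split (x y z : R) :
  (a * x + p * y + q * z) ^+ 2 - mu * (x ^+ 2 + y ^+ 2 + z ^+ 2) =
  - A * (z - q * (a * x + p * y) / A) ^+ 2 + mu * G x y / A.
Proof.
have eta_apq : eta = a ^+ 2 + p ^+ 2 + q ^+ 2 - mu by rewrite unit_apq.
have A_neq0 : A != 0 by move: A_ge; lra.
have al_neq0 : al != 0 by move: al_ge; lra.
move: A_neq0 al_neq0; rewrite /G /A /al eta_apq => A_neq0 al_neq0.
by field; rewrite A_neq0 al_neq0.
Qed.

Let G_le (x y : R) : G x y <= x ^+ 2 * eta * A / al.
Proof.
rewrite /G lerBlDr lerDl mulr_ge0 ?sqr_ge0 //.
by move: al_ge; lra.
Qed.

Lemma cone_line_count (x y : R) :
  \sum_(z <- line N) (near_axis e (row3 x y z) (row3 a p q))%:R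
  <= if 0 < G x y then 2 * `|x| * H2 + 1 else 0.
Proof.
have := A_ge; have := al_ge; have := eta_gt0; have := mu_ge => ? ? ? ?.
case: ifPn => [G_gt0 | /negbTE G_le0]; last first.
  rewrite big1 // => z _; apply/eqP; rewrite pnatr_eq0 eqb0 near_axis_row3.
  rewrite -leNgt -subr_le0 cone_form_split.
  have : 0 <= A * (z - q * (a * x + p * y) / A) ^+ 2 by rewrite mulr_ge0 ?sqr_ge0 //; lra.
  have : mu * G x y / A <= 0 by rewrite pmulr_lle0 ?invr_gt0 ?pmulr_rle0 //; lra.
  lra.
set z0 := q * (a * x + p * y) / A.
rewrite -mulrA; apply: (@line_count_le_ball _ N _ z0) => [|z].
  by rewrite mulr_ge0 ?sqrtr_ge0.
rewrite near_axis_row3 -subr_gt0 cone_form_split -/z0 => cone_z.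
rewrite normr_lt_sqr ?mulr_ge0 ?sqrtr_ge0 // exprMn sqr_sqrtr; last first.
  by rewrite divr_ge0 // mulr_ge0 //; lra.
rewrite real_normK ?num_real // -(ltr_pM2l (_ : 0 < A)); last lra.
have : mu * G x y / A <= mu * (x ^+ 2 * eta * A / al) / A.
  by rewrite ler_pM2r ?invr_gt0 ?ler_pM2l ?G_le //; lra.
have -> : A * (x ^+ 2 * (mu * eta / (al * A))) = mu * (x ^+ 2 * eta * A / al) / A.
  by field; apply/andP; split; lra.
lra.
Qed.

Lemma cone_slice_count (x : R) :
  \sum_(y <- line N) \sum_(z <- line N) (near_axis e (row3 x y z) (row3 a p q))%:R
  <= (2 * `|x| * H1 + 1) * (2 * `|x| * H2 + 1).
Proof.
have := A_ge; have := al_ge; have := eta_gt0 => ? ? ?.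
apply: le_trans (ler_sum _ (fun y _ => cone_line_count x y)) _.
have -> : \sum_(y <- line N) (if 0 < G x y then 2 * `|x| * H2 + 1 else 0) =
    (\sum_(y <- line N) ([pred y | 0 < G x y] y)%:R) * (2 * `|x| * H2 + 1).
  by rewrite mulr_suml; apply: eq_bigr => y _ /=; case: ifP; rewrite ?mul1r ?mul0r.
rewrite ler_wpM2r ?addr_ge0 ?mulr_ge0 ?sqrtr_ge0 // -mulrA.
set y0 := x * a * p / al.
apply: (@line_count_le_ball _ N _ y0) => [|y]; first by rewrite mulr_ge0 ?sqrtr_ge0.
rewrite /= /G -/y0 subr_gt0 => G_gt0.
rewrite normr_lt_sqr ?mulr_ge0 ?sqrtr_ge0 // exprMn sqr_sqrtr; last first.
  by rewrite divr_ge0 ?sqr_ge0 // mulr_ge0 //; lra.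
rewrite real_normK ?num_real // -(ltr_pM2l (_ : 0 < al)); last lra.
have -> : al * (x ^+ 2 * (eta * A / al ^+ 2)) = x ^+ 2 * eta * A / al by field; lra.
exact: G_gt0.
Qed.

Lemma cone_axes_le : [/\ H1 * H2 <= 18 * e, H1 <= 2 & H2 <= 2].
Proof.
have := A_ge; have := A_le; have := al_ge; have := eta_gt0; have := eta_le.
have := mu_ge; have := mu_le; have := e_gt0; have := e_le => ? ? ? ? ? ? ? ? ?.
have al2_ge : 49 / 900 <= al ^+ 2 by nra.
split.
- rewrite -sqrtrM; last by rewrite divr_ge0 ?sqr_ge0 // mulr_ge0 //; lra.
  apply: sqrtr_le; first lra.
  have -> : eta * A / al ^+ 2 * (mu * eta / (al * A)) = eta ^+ 2 * mu / al ^+ 3.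
    by field; apply/andP; split; lra.
  rewrite ler_pdivrMr; last by apply: exprn_gt0; lra.
  have eta2_le : eta ^+ 2 * mu <= 4 * e ^+ 2.
    have : eta <= 2 * e by rewrite eta_E; have := sqr_ge0 e; lra.
    by nra.
  have al3_ge : 1 / 81 <= al ^+ 3 by rewrite exprS; nra.
  by have := sqr_ge0 e; nra.
- apply: sqrtr_le; first lra.
  by rewrite ler_pdivrMr; [nra | apply: exprn_gt0; lra].
- apply: sqrtr_le; first lra.
  by rewrite ler_pdivrMr; [nra | apply: mulr_gt0; lra].
Qed.

Lemma cone_count :
  grid_sum N (fun x y z => (near_axis e (row3 x y z) (row3 a p q))%:R)
  <= 24 * e * N%:R * (N%:R + 1) * (2 * N%:R + 1) + (8 * N%:R + 1) * (2 * N%:R + 1).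
Proof.
have [H12_le H1_le H2_le] := cone_axes_le.
apply: le_trans (_ : \sum_(x <- line N) (72 * e * x ^+ 2 + (8 * N%:R + 1)) <= _).
  rewrite /grid_sum big_seq [leRHS]big_seq; apply: ler_sum => x /line_normr_le x_le.
  apply: le_trans (cone_slice_count x) _.
  have := sqrtr_ge0 (eta * A / al ^+ 2); have := sqrtr_ge0 (mu * eta / (al * A)).
  rewrite -/H1 -/H2 -(real_normK (num_real x)) => ? ?.
  have : `|x| ^+ 2 * (H1 * H2) <= `|x| ^+ 2 * (18 * e) by rewrite ler_wpM2l ?sqr_ge0.
  have : `|x| * (H1 + H2) <= N%:R * 4 by rewrite ler_pM ?addr_ge0 //; lra.
  nra.
rewrite big_split /= sum_line_const -mulr_sumr lerD2r.
have -> : 24 * e * N%:R * (N%:R + 1) * (2 * N%:R + 1) =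
    24 * e * (N%:R * (N%:R + 1) * (2 * N%:R + 1)) by ring.
by rewrite -(sum_line_sqr N); lra.
Qed.

End Cone.

Definition bad_bound (R : realType) (e n : R) : R :=
  (6 * e * n + 1) * (2 * n + 1) ^+ 2 + 24 * e * n * (n + 1) * (2 * n + 1)
  + (8 * n + 1) * (2 * n + 1).

Lemma bad_count_dominant (R : realType) (a p q e : R) (N : nat) :
  a ^+ 2 + p ^+ 2 + q ^+ 2 = 1 -> p ^+ 2 <= a ^+ 2 -> q ^+ 2 <= a ^+ 2 ->
  0 < e -> e <= 1 / 20 ->
  grid_sum N (fun x y z =>
    (near_plane e (row3 x y z) (row3 a p q) || near_axis e (row3 x y z) (row3 a p q))%:R)
  <= bad_bound e N%:R.
Proof.
move=> unit_apq p2_le q2_le e_gt0 e_le.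
apply: le_trans (_ : grid_sum N (fun x y z =>
    (near_plane e (row3 x y z) (row3 a p q))%:R
    + (near_axis e (row3 x y z) (row3 a p q))%:R) <= _).
  apply: ler_grid_sum => x y z; rewrite -natrD ler_nat.
  by case: (near_plane _ _ _); case: (near_axis _ _ _).
rewrite grid_sumD /bad_bound -addrA lerD ?cone_count //.
by apply: band_count; move: e_gt0 unit_apq p2_le q2_le (sqr_ge0 p) (sqr_ge0 q); lra.
Qed.

Lemma bad_count (R : realType) (e : R) (N : nat) (u : 'rV[R]_3) :
  unit3 u -> 0 < e -> e <= 1 / 20 ->
  grid_sum N (fun x y z => (near_plane e (row3 x y z) u || near_axis e (row3 x y z) u)%:R)
  <= bad_bound e N%:R.
Proof.
rewrite [u]row3_coords /unit3 dot3_row3 -!expr2.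
move: (u 0 0) (u 0 1) (u 0 2) => a p q unit_apq e_gt0 e_le.
pose bad a p q x y z : R :=
  (near_plane e (row3 x y z) (row3 a p q) || near_axis e (row3 x y z) (row3 a p q))%:R.
have bad_swap a' p' q' : grid_sum N (bad a' p' q') = grid_sum N (bad p' a' q').
  rewrite grid_sum_swap; apply: eq_grid_sum => x y z.
  rewrite /bad /near_plane /near_axis.
  by rewrite (dot3_row3_swap x y z p') (dot3_row3_swap x y z x).
have bad_rot a' p' q' : grid_sum N (bad a' p' q') = grid_sum N (bad q' a' p').
  rewrite grid_sum_rot; apply: eq_grid_sum => x y z.
  rewrite /bad /near_plane /near_axis.
  by rewrite (dot3_row3_rot x y z q') (dot3_row3_rot x y z x).
change (grid_sum N (bad a p q) <= bad_bound e N%:R).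
have [[p2_le q2_le] | [a2_le q2_le] | [a2_le p2_le]] :
    [\/ p ^+ 2 <= a ^+ 2 /\ q ^+ 2 <= a ^+ 2, a ^+ 2 <= p ^+ 2 /\ q ^+ 2 <= p ^+ 2
      | a ^+ 2 <= q ^+ 2 /\ p ^+ 2 <= q ^+ 2].
  case: (lerP (p ^+ 2) (a ^+ 2)) => pa; case: (lerP (q ^+ 2) (a ^+ 2)) => qa;
  case: (lerP (q ^+ 2) (p ^+ 2)) => qp;
  first [by apply: Or31; split; lra | by apply: Or32; split; lra
        | by apply: Or33; split; lra].
- exact: bad_count_dominant.
- by rewrite bad_swap; apply: bad_count_dominant => //; lra.
- by rewrite bad_rot; apply: bad_count_dominant => //; lra.
Qed.

Section Normalize.
Context {R : realType}.

Lemma dot3Zl (c : R) (x y : 'rV[R]_3) : dot3 (c *: x) y = c * dot3 x y.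
Proof. by rewrite /dot3 mulr_sumr; apply: eq_bigr => j _; rewrite mxE mulrA. Qed.

Lemma dot3Zr (c : R) (x y : 'rV[R]_3) : dot3 x (c *: y) = c * dot3 x y.
Proof. by rewrite /dot3 mulr_sumr; apply: eq_bigr => j _; rewrite mxE mulrCA. Qed.

Lemma dot3_ge0 (x : 'rV[R]_3) : 0 <= dot3 x x.
Proof. by rewrite /dot3 sumr_ge0 // => j _; rewrite -expr2 sqr_ge0. Qed.

Definition normalize3 (x : 'rV[R]_3) : 'rV[R]_3 := (Num.sqrt (dot3 x x))^-1 *: x.

Lemma unit3_normalize3 (x : 'rV[R]_3) : 0 < dot3 x x -> unit3 (normalize3 x).
Proof.
move=> x_gt0; rewrite /unit3 /normalize3 dot3Zl dot3Zr mulrA -expr2 exprVn.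
by rewrite sqr_sqrtr ?mulVf ?ltW // gt_eqF.
Qed.

Variables (e : R) (x u : 'rV[R]_3).
Hypotheses (off_plane : ~~ near_plane e x u) (off_axis : ~~ near_axis e x u).

Lemma off_plane_axis_dot3_gt0 : 0 < dot3 x x.
Proof.
have := dot3_ge0 x; rewrite le_eqVlt => /orP[/eqP S0 | //].
move: off_plane off_axis; rewrite /near_plane /near_axis -ltNge -leNgt -S0 !mulr0.
lra.
Qed.

Lemma normalize3_dot3_bounds : 0 <= e <= 1 -> e <= `|dot3 (normalize3 x) u| <= 1 - e.
Proof.
case/andP=> e_ge0 e_le1.
have S_gt0 := off_plane_axis_dot3_gt0.
move: off_plane off_axis; rewrite /near_plane /near_axis -ltNge -leNgt => lt_D le_D.
have s_gt0 : 0 < Num.sqrt (dot3 x x) by rewrite sqrtr_gt0.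
rewrite /normalize3 dot3Zl normrM normfV (gtr0_norm s_gt0).
rewrite mulrC ler_pdivlMr // ler_pdivrMr //; apply/andP; split.
  rewrite -ler_sqr ?nnegrE ?mulr_ge0 ?sqrtr_ge0 ?normr_ge0 // real_normK ?num_real //.
  by rewrite exprMn (sqr_sqrtr (ltW S_gt0)); move: lt_D; lra.
by rewrite normr_le_sqr ?mulr_ge0 ?sqrtr_ge0 ?subr_ge0 // exprMn (sqr_sqrtr (ltW S_gt0)).
Qed.

End Normalize.

Lemma bad_bound_budget (R : realType) (k : R) : 0 < k ->
  k * bad_bound (1 / (10 * k)) (30 * k) < (2 * (30 * k) + 1) ^+ 3.
Proof.
move=> k_gt0; rewrite -subr_gt0.
have -> : (2 * (30 * k) + 1) ^+ 3 - k * bad_bound (1 / (10 * k)) (30 * k)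
    = (60 * k + 1) * (60 * k ^+ 2 + 28 * k + 1).
  by rewrite /bad_bound; field; rewrite gt_eqF.
by rewrite mulr_gt0 //; have := sqr_ge0 k; lra.
Qed.

Lemma sum_indicator_lt1 (R : realType) (I : finType) (b : I -> bool) :
  \sum_i (b i)%:R < 1 :> R -> forall i, ~~ b i.
Proof.
move=> lt1 i; apply/negP => bi; move: lt1; rewrite (bigD1 i) //= bi ltNge lerDl.
by rewrite sumr_ge0.
Qed.

Theorem lemma7p2 (R : realType) (k : nat) (hk : (2 <= k)%N)
  (ds : 'I_k -> 'rV[R]_3) (hds : forall i, unit3 (ds i)) :
  exists d : 'rV[R]_3, unit3 d /\
    forall i : 'I_k,
      1 / (10 * k%:R) <= `|dot3 d (ds i)| <= 1 - 1 / (10 * k%:R).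
Proof.
have k_ge2 : 2 <= k%:R :> R by rewrite (ler_nat R 2 k).
set e := 1 / (10 * k%:R).
have e_gt0 : 0 < e by rewrite divr_gt0 //; lra.
have e_le : e <= 1 / 20.
  rewrite /e ler_pdivrMr; last lra.
  by rewrite mulrC mulrA ler_pdivlMr; lra.
pose N := (30 * k)%N.
pose bad i x y z := near_plane e (row3 x y z) (ds i) || near_axis e (row3 x y z) (ds i).
have : grid_sum N (fun x y z => \sum_i (bad i x y z)%:R) < grid_sum N (fun _ _ _ => 1).
  rewrite grid_sum_sum grid_sum_const mul1r.
  apply: (@le_lt_trans _ _ (\sum_(i < k) bad_bound e N%:R)).
    by apply: ler_sum => i _; apply: bad_count.
  rewrite sumr_const card_ord -[_ *+ k]mulr_natl natrM.
  by apply: bad_bound_budget; lra.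
case/grid_sum_lt_exists=> x [y [z /sum_indicator_lt1 good]].
have {}good i : ~~ near_plane e (row3 x y z) (ds i) /\ ~~ near_axis e (row3 x y z) (ds i).
  by apply/andP; rewrite -negb_or; apply: good.
exists (normalize3 (row3 x y z)); split.
  have [off_plane off_axis] := good (Ordinal (leq_trans (isT : (0 < 2)%N) hk)).
  exact/unit3_normalize3/off_plane_axis_dot3_gt0/off_axis.
move=> i; have [off_plane off_axis] := good i.
by apply: normalize3_dot3_bounds => //; rewrite ltW //=; lra.
Qed.
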